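(* Let $(\xi_j)_{j=1}^\infty$ be an i.i.d. sequence of strictly positive random variables, let $\xi$ have the common distribution, and let \[ Y = 1 + \xi_1 + \xi_1\xi_2 + \xi_1\xi_2\xi_3 + \cdots = \sum_{k=0}^{\infty} \prod_{j=1}^{k} \xi_j \] (empty product equal to $1$). For real $q$ write $\mu_q = \mathbb{E}(\xi^q)$. Then for every real $p \ge 1$: $\mathbb{E}(Y^p) < \infty$ if and only if $\mu_p < 1$. Moreover, if $\mu_p<1$, then $\mu_q < 1$ for every real $1 \le q \le p$ and \[ \mathbb{E}(Y^p) \le \bigl(1 - \mu_p^{1/p}\bigr)^{-p}; \] and if in addition $p \ge 1$ is an integer, then \[ \mathbb{E}(Y^p) = \frac{1}{1-\mu_p} \sum_{k=0}^{p-1} \binom{p}{k} \mu_k \, \mathbb{E}(Y^k). \] *)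

From HB Require Import structures.
From mathcomp Require Import all_boot all_order all_algebra.
From mathcomp Require Import all_classical all_reals all_analysis.
Set Implicit Arguments. Unset Strict Implicit. Unset Printing Implicit Defensive.
Import Order.TTheory GRing.Theory Num.Theory.
Local Open Scope classical_set_scope.
Local Open Scope ring_scope.

(* (xi_j)_j (indexed from 0: xi 0 plays the role of xi_1) is an i.i.d.
   sequence of real random variables on the probability space P. *)
Definition iid_seq {d} {T : measurableType d} {R : realType}
    (P : probability T R) (xi : nat -> T -> R) : Prop :=
  (forall j, measurable_fun setT (xi j)) /\
  (forall j (B : set R), measurable B ->
     P (xi j @^-1` B) = P (xi 0%N @^-1` B)) /\
  (forall (J : seq nat) (B : nat -> set R), uniq J ->
     (forall j, measurable (B j)) ->
     P (\bigcap_(j in [set j | j \in J]) (xi j @^-1` B j)) =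
     (\prod_(j <- J) P (xi j @^-1` B j))%E).

Definition mom {d} {T : measurableType d} {R : realType}
    (P : probability T R) (xi : nat -> T -> R) (q : R) : \bar R :=
  (\int[P]_x ((xi 0%N x) `^ q)%:E)%E.

Definition Yperp {R : realType} {T : Type} (xi : nat -> T -> R) (x : T) : \bar R :=
  (\sum_(0 <= k <oo) (\prod_(j < k) xi j x)%:E)%E.

Definition EYp {d} {T : measurableType d} {R : realType}
    (P : probability T R) (xi : nat -> T -> R) (p : R) : \bar R :=
  (\int[P]_x (Yperp xi x `^ p))%E.

(* Write X_k = xi_1 ... xi_k for the terms of Y and Y_N for its partial sums.
   Independence gives E(X_k^p) = mu_p^k; this product rule is obtained from the one
   for indicators, which is the definition of independence, by approximating one
   coordinate at a time with simple functions and passing to the limit by monotone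
   convergence.  If E(Y^p) < oo then, t |-> t^p being superadditive for p >= 1,
   sum_k mu_p^k <= E(Y^p), which forces mu_p < 1.  Conversely Minkowski's inequality
   gives ||Y_N||_p <= sum_k mu_p^(k/p) <= (1 - mu_p^(1/p))^-1, and monotone
   convergence passes to Y.  For q <= p, Young's inequality gives pointwise
   xi^q <= 1 - q/p + (q/p) xi^p, hence mu_q < 1.  For p = n an integer, write
   Y_(N+1) = 1 + xi_1 Y'_N with Y'_N built from the shifted sequence; expanding with
   the binomial and multinomial theorems, E(xi_1^k Y'_N^k) and mu_k E(Y_N^k) are the
   same sum of products of moments, so E(Y_(N+1)^n) = sum_(k<=n) C(n,k) mu_k E(Y_N^k).
   Letting N -> oo and solving for E(Y^n) gives the recursion. *)

From HB Require Import structures.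
From mathcomp Require Import all_boot all_order all_algebra.
From mathcomp Require Import all_classical all_reals all_analysis.
From mathcomp Require Import measurable_realfun.
From mathcomp Require Import ring lra.
Import Order.TTheory GRing.Theory Num.Theory.
Set Implicit Arguments. Unset Strict Implicit. Unset Printing Implicit Defensive.
Local Open Scope classical_set_scope.
Local Open Scope ring_scope.

(** * Real inequalities and limits *)

Lemma powR_prod (R : realType) (I : Type) (s : seq I) (F : I -> R) (r : R) :
  (forall i, 0 <= F i) -> (\prod_(i <- s) F i) `^ r = \prod_(i <- s) F i `^ r.
Proof.
move=> F0; elim: s => [|i s IH]; first by rewrite !big_nil powR1.
by rewrite !big_cons powRM ?IH //; exact: prodr_ge0.
Qed.

Lemma powRD_ge (R : realType) (a b r : R) : 1 <= r -> 0 <= a -> 0 <= b ->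
  a `^ r + b `^ r <= (a + b) `^ r.
Proof.
move=> r1 a0 b0; have r0 : 0 < r by apply: lt_le_trans r1.
have ab0 : 0 <= a + b by rewrite addr_ge0.
rewrite -(mulr_powRB1 a0 r0) -(mulr_powRB1 b0 r0) -(mulr_powRB1 ab0 r0) mulrDl.
by apply: lerD; apply: ler_wpM2l => //; apply: ge0_ler_powR;
  rewrite ?nnegrE ?subr_ge0 ?lerDl ?lerDr.
Qed.

Lemma sum_powR_le (R : realType) (N : nat) (F : nat -> R) (r : R) :
  1 <= r -> (forall k, 0 <= F k) ->
  \sum_(k < N) F k `^ r <= (\sum_(k < N) F k) `^ r.
Proof.
move=> r1 F0; elim: N => [|N IH].
  by rewrite !big_ord0 powR0 // gt_eqF // (lt_le_trans ltr01 r1).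
rewrite !big_ord_recr /=; apply: le_trans (powRD_ge r1 _ _) => //.
  by rewrite lerD2r.
exact: sumr_ge0.
Qed.

(* Young's inequality with exponents [1/t] and [1/(1 - t)], applied to [y^t] and [1]. *)
Lemma powR_le_affine (R : realType) (y t : R) : 0 <= y -> 0 < t < 1 ->
  y `^ t <= (1 - t) + t * y.
Proof.
move=> y0 /andP[t0 t1].
have := @conjugate_powR _ (y `^ t) 1 t^-1 (1 - t)^-1 (powR_ge0 _ _) ler01.
rewrite !invrK invr_gt0 t0 invr_gt0 subr_gt0 t1 subrKC mulr1 -powRrM.
rewrite mulfV ?gt_eqF // powRr1 // powR1 => /(_ isT isT erefl).
by rewrite mul1r addrC mulrC.
Qed.

Lemma sum_expr_le_geometric (R : realFieldType) (a : R) N : 0 <= a -> a < 1 ->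
  \sum_(k < N) a ^+ k <= (1 - a)^-1.
Proof.
move=> a0 a1; have a1' : 0 < 1 - a by rewrite subr_gt0.
have sumE : (1 - a) * \sum_(k < N) a ^+ k = 1 - a ^+ N.
  elim: N => [|N IH]; first by rewrite big_ord0 mulr0 expr0 subrr.
  by rewrite big_ord_recr /= mulrDr IH exprSr; ring.
rewrite -[leLHS](mulKf (lt0r_neq0 a1')) sumE -[leRHS]mulr1.
by apply: ler_wpM2l; [rewrite invr_ge0 ltW | rewrite gerBl exprn_ge0].
Qed.

Lemma poweR_le (R : realType) (x y : \bar R) (r : R) :
  (0 <= r)%R -> (0 <= x)%E -> (x <= y)%E -> (x `^ r <= y `^ r)%E.
Proof.
move=> r0 x0 xy; apply: gt0_ler_poweR => //; rewrite in_itv /= leey andbT //.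
exact: le_trans xy.
Qed.

Lemma poweR_ereal_sup (R : realType) (u : nat -> R) (r : R) :
  (0 < r)%R -> (forall N, 0 <= u N)%R ->
  (ereal_sup (range (EFin \o u)) `^ r = ereal_sup (range (fun N => (u N `^ r)%:E)))%E.
Proof.
move=> r0 u0; set s := ereal_sup _; set t := ereal_sup _.
have s_ge0 : (0 <= s)%E.
  by apply: le_trans (ereal_sup_ubound (ex_intro2 _ _ 0%N I erefl)); rewrite lee_fin.
have t_ge0 : (0 <= t)%E.
  by apply: le_trans (ereal_sup_ubound (ex_intro2 _ _ 0%N I erefl)); rewrite lee_fin powR_ge0.
apply/eqP; rewrite eq_le; apply/andP; split.
- have s_le : (s <= t `^ r^-1)%E.
    apply: ge_ereal_sup => _ [N _ <-] /=.
    rewrite -[X in (X%:E <= _)%E](@powRr1 _ (u N)) // -(mulfV (lt0r_neq0 r0)).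
    rewrite powRrM -poweR_EFin poweR_le ?invr_ge0 ?(ltW r0) ?lee_fin ?powR_ge0 //.
    by apply: ereal_sup_ubound; exists N.
  rewrite -[leRHS](poweRe1 t_ge0) -(mulVf (lt0r_neq0 r0)) poweRrM.
  exact: poweR_le (ltW r0) s_ge0 s_le.
- apply: ge_ereal_sup => _ [N _ <-]; rewrite -poweR_EFin.
  by apply: poweR_le; rewrite ?(ltW r0) ?lee_fin //; apply: ereal_sup_ubound; exists N.
Qed.

Lemma cvge_sum_ge0 (R : realType) (I : Type) (s : seq I) (u : I -> nat -> \bar R)
    (l : I -> \bar R) :
  (forall i N, (0 <= u i N)%E) -> (forall i, (0 <= l i)%E) ->
  (forall i, u i N @[N --> \oo] --> l i) ->
  (\sum_(i <- s) u i N)%E @[N --> \oo] --> (\sum_(i <- s) l i)%E.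
Proof.
move=> u0 l0 ul; elim: s => [|i s IH].
  by rewrite big_nil; under eq_fun do rewrite big_nil; exact: cvg_cst.
rewrite big_cons; under eq_fun do rewrite big_cons.
by apply: cvgeD => //; apply: ge0_adde_def; rewrite inE // sume_ge0.
Qed.

Section monotone_comp.
Context (R : realType) (d : measure_display) (T : measurableType d)
  (mu : measure T R).
Local Open Scope ereal_scope.

Lemma cvg_integral_comp_mul (phi : nat -> R -> R) (g : R -> R) (X h : T -> R) :
  (forall m, measurable_fun setT (phi m)) -> (forall m y, (0 <= phi m y)%R) ->
  (forall y, {homo phi^~ y : m n / (m <= n)%N >-> (m <= n)%R}) ->
  (forall y, (phi m y)%:E @[m --> \oo] --> (g y)%:E) ->
  measurable_fun setT X -> measurable_fun setT h -> (forall x, (0 <= h x)%R) ->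
  \int[mu]_x (phi m (X x) * h x)%:E @[m --> \oo] --> \int[mu]_x (g (X x) * h x)%:E.
Proof.
move=> mphi phi0 phi_nd phi_cvg mX mh h0.
have mphiXh m : measurable_fun setT (fun x => (phi m (X x) * h x)%:E).
  by apply/measurable_EFinP; apply: measurable_funM => //; exact: measurableT_comp.
have := @cvg_monotone_convergence _ _ _ mu setT measurableT _ mphiXh.
have -> : (fun x => limn ((fun m x => (phi m (X x) * h x)%:E)^~ x)) =
          (fun x => (g (X x) * h x)%:E).
  apply: funext => x; apply: cvg_lim => //.
  under eq_fun do rewrite EFinM.
  by rewrite EFinM; apply: cvgeZr.
apply.
- by move=> m x _; rewrite lee_fin mulr_ge0.
- by move=> x _ m n mn; rewrite lee_fin ler_wpM2r ?phi_nd.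
Qed.

End monotone_comp.

(** * Expectations of products of independent variables *)

Section iid.
Context (R : realType) (d : measure_display) (T : measurableType d)
  (P : probability T R) (xi : nat -> T -> R).
Local Open Scope ereal_scope.

Lemma prod_indic_xi (J : seq nat) (B : nat -> set R) x :
  (\prod_(j <- J) \1_(B j) (xi j x) : R)%R =
  \1_(\bigcap_(j in [set j | j \in J]) (xi j @^-1` B j)) x.
Proof.
rewrite [RHS]indicE; case: (boolP (x \in _)) => [/set_mem Bx|Bx].
- by rewrite big_seq big1 // => j jJ; rewrite indicE mem_set //; exact: Bx.
- apply/eqP; rewrite prodf_seq_eq0; apply/negPn/negP => /hasPn notB0.
  apply: (negP Bx); apply/mem_set => j /= jJ.
  by have := notB0 j jJ; rewrite /= indicE; case: (boolP (_ \in _)) => [/set_mem|]; rewrite ?eqxx.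
Qed.

Hypothesis hiid : iid_seq P xi.

Lemma measurable_xi j : measurable_fun setT (xi j).
Proof. exact: hiid.1. Qed.

Lemma measurable_xi_preimage j (B : set R) : measurable B -> measurable (xi j @^-1` B).
Proof. by move=> mB; rewrite -[X in measurable X]setTI; exact: measurable_xi. Qed.

Lemma integral_indic_xi j (A : set R) : measurable A ->
  \int[P]_x (\1_A (xi j x))%:E = P (xi j @^-1` A).
Proof.
move=> mA; under eq_integral do rewrite -[\1_A _]/(\1_(xi j @^-1` A) _).
by rewrite integral_indic ?setIT //; exact: measurable_xi_preimage.
Qed.

Lemma iid_integral_prod_indic (J : seq nat) (B : nat -> set R) :
  uniq J -> (forall j, measurable (B j)) ->
  \int[P]_x (\prod_(j <- J) \1_(B j) (xi j x))%:E =
  \prod_(j <- J) \int[P]_x (\1_(B j) (xi 0 x))%:E.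
Proof.
move=> uJ mB; under eq_integral do rewrite prod_indic_xi.
rewrite integral_indic ?setIT //; last first.
  by apply: bigcap_measurableType => j _; exact: measurable_xi_preimage.
transitivity (\prod_(j <- J) P (xi j @^-1` B j)); first exact: hiid.2.2.
apply: eq_bigr => j _.
by rewrite integral_indic_xi // hiid.2.1.
Qed.

End iid.

Section factorization.
Context (R : realType) (d : measure_display) (T : measurableType d)
  (P : probability T R) (xi : nat -> T -> R) (hiid : iid_seq P xi).
Local Open Scope ereal_scope.

Definition integrable_ge0_family (f : nat -> R -> R) :=
  [/\ forall j, measurable_fun setT (f j), forall j y, (0 <= f j y)%R &
      forall j, \int[P]_x (f j (xi 0 x))%:E < +oo].

Definition factorizes (J : seq nat) (f : nat -> R -> R) :=
  \int[P]_x (\prod_(j <- J) f j (xi j x))%:E =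
  \prod_(j <- J) \int[P]_x (f j (xi 0 x))%:E.

Section one_factor.
Variables (J : seq nat) (f : nat -> R -> R) (a : nat).
Hypotheses (uJ : uniq J) (aJ : a \in J) (hf : integrable_ge0_family f).

Let mxi := measurable_xi hiid.
Let f_ge0 j y : (0 <= f j y)%R. Proof. by case: hf. Qed.
Let measurable_f j : measurable_fun setT (f j). Proof. by case: hf. Qed.

Let others x := (\prod_(j <- J | j != a) f j (xi j x))%R.
Let others_mean := \prod_(j <- J | j != a) \int[P]_x (f j (xi 0 x))%:E.

Let splits (g : R -> R) :=
  \int[P]_x (g (xi a x) * others x)%:E = \int[P]_x (g (xi 0 x))%:E * others_mean.

Let others_ge0 x : (0 <= others x)%R. Proof. exact: prodr_ge0. Qed.

Let measurable_others : measurable_fun setT others.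
Proof.
rewrite /others; under eq_fun do rewrite -big_filter.
by apply: measurable_prod => j _; exact: measurableT_comp.
Qed.

Let others_mean_fin_num : others_mean \is a fin_num.
Proof.
apply: (big_ind (fun x => x \is a fin_num)) => //; first exact: fin_numM.
move=> j _; rewrite ge0_fin_numE; first by case: hf.
by apply: integral_ge0 => x _; rewrite lee_fin.
Qed.

Let factorizes_updE g : factorizes J [eta f with a |-> g] <-> splits g.
Proof.
have others_upd x :
    (\prod_(j <- J | j != a) [eta f with a |-> g] j (xi j x) = others x)%R.
  by apply: eq_bigr => j /negbTE /= ->.
have others_mean_upd : \prod_(j <- J | j != a)
    \int[P]_x ([eta f with a |-> g] j (xi 0 x))%:E = others_mean.
  by apply: eq_bigr => j /negbTE /= ->.
rewrite /factorizes /splits (bigD1_seq a) //= eqxx others_mean_upd.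
by under eq_integral do rewrite (bigD1_seq a) //= eqxx others_upd.
Qed.

Let measurable_comp_xi j (g : R -> R) :
  measurable_fun setT g -> measurable_fun setT (fun x => g (xi j x)).
Proof. by move=> mg; exact: measurableT_comp. Qed.

Let splits_sum_indic (I : Type) (s : seq I) (c : I -> R) (A : I -> set R) :
  (forall i, 0 <= c i)%R -> (forall i, measurable (A i)) ->
  (forall B, measurable B -> splits \1_B) ->
  splits (fun y => \sum_(i <- s) c i * \1_(A i) y)%R.
Proof.
move=> c_ge0 mA split_indic; rewrite /splits.
have indic_ge0 i y : (0 <= \1_(A i) y :> R)%R by rewrite indicE.
have mindic i j : measurable_fun setT (fun x => \1_(A i) (xi j x) : R).
  by apply: measurable_comp_xi; exact: measurable_indic.
under eq_integral do rewrite mulr_suml -sumEFin.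
under [X in _ = X * _]eq_integral do rewrite -sumEFin.
rewrite [LHS]ge0_integral_sum //; last 2 first.
- by move=> i; apply/measurable_EFinP; apply: measurable_funM => //; exact: measurable_funM.
- by move=> i x _; rewrite lee_fin !mulr_ge0.
rewrite ge0_integral_sum //; last 2 first.
- by move=> i; apply/measurable_EFinP; apply: measurable_funM.
- by move=> i x _; rewrite lee_fin mulr_ge0.
rewrite ge0_sume_distrl; last by move=> i _; apply: integral_ge0 => x _; rewrite lee_fin mulr_ge0.
apply: eq_bigr => i _.
under eq_integral do rewrite -mulrA EFinM.
under [in RHS]eq_integral do rewrite EFinM.
rewrite [LHS]ge0_integralZl_EFin //; last 2 first.
- by move=> x _; rewrite lee_fin mulr_ge0.
- by apply/measurable_EFinP; apply: measurable_funM.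
rewrite ge0_integralZl_EFin //; last exact/measurable_EFinP.
by rewrite (split_indic _ (mA i)) muleA.
Qed.

Import HBNNSimple.

Let splits_nnsfun (phi : {nnsfun R >-> R}) :
  (forall B, measurable B -> splits \1_B) -> splits phi.
Proof.
move=> split_indic.
have -> : (phi : R -> R) = (fun y => \sum_(r <- finmap.enum_fset (fset_set (range phi)))
    `|r| * \1_(phi @^-1` [set r]) y)%R.
  apply: funext => y; rewrite [LHS]fimfunE fsbig_finite; last exact: fimfunP.
  apply: eq_big_seq => r; rewrite in_fset_set; last exact: fimfunP.
  by rewrite inE => -[z _ <-]; rewrite ger0_norm // fun_ge0.
by apply: splits_sum_indic => // r; exact: measurable_fun_set1.
Qed.

Let splits_from_indic : (forall B, measurable B -> splits \1_B) -> splits (f a).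
Proof.
move=> split_indic.
have mfa : measurable_fun setT (EFin \o f a) by exact/measurable_EFinP.
pose phi := nnsfun_approx measurableT mfa.
have phi_cvg y : (phi m y)%:E @[m --> \oo] --> (f a y)%:E.
  by apply: cvg_nnsfun_approx => // z _ /=; rewrite lee_fin.
have phi_nd y : {homo phi^~ y : m n / (m <= n)%N >-> (m <= n)%R}.
  by move=> m n mn; have /lefP := nd_nnsfun_approx measurableT mfa mn; apply.
have phi_ge0 m y : (0 <= phi m y)%R by exact: fun_ge0.
have mphi m : measurable_fun setT (phi m : R -> R) by exact: measurable_funPT.
have mone : measurable_fun setT (cst 1%R : T -> R) by exact: measurable_cst.
have lim_others := @cvg_integral_comp_mul _ _ _ P _ _ _ _ mphi phi_ge0 phi_nd phi_cvg (mxi a)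
  measurable_others others_ge0.
have mul1 (g : R -> R) : \int[P]_x (g (xi 0%N x) * cst 1 x)%:E = \int[P]_x (g (xi 0%N x))%:E.
  by under eq_integral do rewrite mulr1.
have := @cvg_integral_comp_mul _ _ _ P _ _ _ _ mphi phi_ge0 phi_nd phi_cvg
  (mxi 0%N) mone (fun=> ler01).
move=> /(cvgeZr others_mean_fin_num); rewrite mul1; under eq_fun do rewrite mul1; move=> lim_xi0.
move: lim_others; under eq_fun do rewrite (splits_nnsfun (phi _) split_indic).
by move/cvg_unique; apply.
Qed.

Lemma factorizes_from_indic :
  (forall B, measurable B -> factorizes J [eta f with a |-> \1_B]) -> factorizes J f.
Proof.
move=> fact_indic.
have -> : f = [eta f with a |-> f a] by apply: funext => j /=; case: eqP => // ->.
by apply/factorizes_updE/splits_from_indic => B mB; apply/factorizes_updE/fact_indic.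
Qed.

End one_factor.

Lemma integrable_ge0_family_upd f a (B : set R) : integrable_ge0_family f ->
  measurable B -> integrable_ge0_family [eta f with a |-> \1_B].
Proof.
move=> [mf f_ge0 f_fin] mB; split => j /=; case: eqP => _ //.
rewrite integral_indic_xi //; apply: le_lt_trans (ltry 1).
by apply: probability_le1; exact: (measurable_xi_preimage hiid).
Qed.

Lemma iid_integral_prod (J : seq nat) (f : nat -> R -> R) :
  uniq J -> integrable_ge0_family f -> factorizes J f.
Proof.
move=> uJ.
suff indic_outside (L : seq nat) g : integrable_ge0_family g ->
    (forall j, j \in J -> j \notin L -> exists2 B, measurable B & g j = \1_B) ->
    factorizes J g.
  by move=> hf; apply: (indic_outside J) => // j ->.
elim: L g => [|a L IH] g hg g_indic.
- have hB j : exists B : set R, measurable B /\ (j \in J -> g j = \1_B).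
    have [jJ|jJ] := boolP (j \in J).
      by have [B mB ->] := g_indic j jJ isT; exists B.
    by exists setT; split => // /negP.
  have [B {}hB] := choice hB.
  have gB j : j \in J -> g j = \1_(B j) := (hB j).2.
  transitivity (\int[P]_x (\prod_(j <- J) \1_(B j) (xi j x))%:E).
    by apply: eq_integral => x _; congr EFin; apply: eq_big_seq => j /gB ->.
  rewrite iid_integral_prod_indic // => [|j]; last by case: (hB j).
  by apply: eq_big_seq => j /gB ->.
- have [aJ|aJ] := boolP (a \in J); last first.
    apply: IH => // j jJ jL; apply: g_indic; rewrite // in_cons negb_or jL andbT.
    by apply: contraNneq aJ => <-.
  apply: (factorizes_from_indic uJ aJ hg) => B mB.
  apply: IH; first exact: integrable_ge0_family_upd.
  move=> j jJ jL /=; case: eqP => [_|/eqP ja]; first by exists B.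
  by apply: g_indic; rewrite // in_cons negb_or ja.
Qed.

End factorization.

(** * Partial sums of [Y] *)

Definition Yterm {R : realType} {T : Type} (xi : nat -> T -> R) (k : nat) (x : T) : R :=
  (\prod_(j < k) xi j x)%R.

Definition Ypartial {R : realType} {T : Type} (xi : nat -> T -> R) (N : nat) (x : T) : R :=
  (\sum_(k < N) Yterm xi k x)%R.

Section partial_sums.
Context (R : realType) (d : measure_display) (T : measurableType d)
  (P : probability T R) (xi : nat -> T -> R)
  (mxi : forall j, measurable_fun setT (xi j)) (hpos : forall j x, (0 < xi j x)%R).
Local Open Scope ereal_scope.

Lemma Yterm_gt0 k x : (0 < Yterm xi k x)%R.
Proof. exact: prodr_gt0. Qed.

Lemma Ypartial_ge0 N x : (0 <= Ypartial xi N x)%R.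
Proof. by apply: sumr_ge0 => k _; exact/ltW/Yterm_gt0. Qed.

Lemma YpartialS N x : Ypartial xi N.+1 x = (Ypartial xi N x + Yterm xi N x)%R.
Proof. exact: big_ord_recr. Qed.

Lemma Ypartial_nd x : {homo Ypartial xi ^~ x : m n / (m <= n)%N >-> (m <= n)%R}.
Proof.
apply: homo_leq => [//|y z w|N]; first exact: le_trans.
by rewrite YpartialS lerDl ltW // Yterm_gt0.
Qed.

Lemma measurable_Yterm k : measurable_fun setT (Yterm xi k).
Proof. by apply: measurable_prod => j _; exact: mxi. Qed.

Lemma measurable_Ypartial N : measurable_fun setT (Ypartial xi N).
Proof. by apply: measurable_sum => k; exact: measurable_Yterm. Qed.

Lemma measurable_Ypartial_powR N r :
  measurable_fun setT (fun x => ((Ypartial xi N x) `^ r)%:E).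
Proof. exact/measurable_EFinP/(measurableT_comp (measurable_powR r))/measurable_Ypartial. Qed.

Lemma Yperp_sup x : Yperp xi x = ereal_sup (range (fun N => (Ypartial xi N x)%:E)).
Proof.
rewrite /Yperp (_ : (fun n => _) = fun N => (Ypartial xi N x)%:E).
  by apply/cvg_lim/ereal_nondecreasing_cvgn => // m n mn; rewrite lee_fin Ypartial_nd.
by apply: funext => N; rewrite sumEFin big_mkord.
Qed.

Lemma moment_Ypartial_nd r : (0 <= r)%R ->
  {homo (fun N => \int[P]_x ((Ypartial xi N x) `^ r)%:E) : m n / (m <= n)%N >-> m <= n}.
Proof.
move=> r0 m n mn; apply: ge0_le_integral => //; try exact: measurable_Ypartial_powR.
- by move=> x _; rewrite lee_fin powR_ge0.
- by move=> x _; rewrite lee_fin ge0_ler_powR ?nnegrE ?Ypartial_ge0 ?Ypartial_nd.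
Qed.

Lemma cvg_moment_Ypartial r : (0 < r)%R ->
  \int[P]_x ((Ypartial xi N x) `^ r)%:E @[N --> \oo] --> EYp P xi r.
Proof.
move=> r0.
have := @cvg_monotone_convergence _ _ _ P setT measurableT _ (measurable_Ypartial_powR ^~ r).
rewrite /EYp (_ : (fun x => limn _) = fun x => Yperp xi x `^ r).
  apply=> [N x _|x _ m n mn]; first by rewrite lee_fin powR_ge0.
  by rewrite lee_fin ge0_ler_powR ?nnegrE ?Ypartial_ge0 ?Ypartial_nd ?(ltW r0).
apply: funext => x; rewrite Yperp_sup (poweR_ereal_sup r0 (Ypartial_ge0 ^~ x)).
apply/cvg_lim/ereal_nondecreasing_cvgn => // m n mn.
by rewrite lee_fin ge0_ler_powR ?nnegrE ?Ypartial_ge0 ?Ypartial_nd ?(ltW r0).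
Qed.

Lemma EYp_sup r : (0 < r)%R ->
  EYp P xi r = ereal_sup (range (fun N => \int[P]_x ((Ypartial xi N x) `^ r)%:E)).
Proof.
move=> r0; have := ereal_nondecreasing_cvgn (moment_Ypartial_nd (ltW r0)).
exact: cvg_unique (cvg_moment_Ypartial r0).
Qed.

Lemma moment_Ypartial_le r N : (0 < r)%R ->
  \int[P]_x ((Ypartial xi N x) `^ r)%:E <= EYp P xi r.
Proof. by move=> r0; rewrite EYp_sup //; apply: ereal_sup_ubound; exists N. Qed.

End partial_sums.

Lemma YpartialSl (R : realType) (T : Type) (xi : nat -> T -> R) N x :
  Ypartial xi N.+1 x = 1 + xi 0%N x * Ypartial (fun j => xi j.+1) N x.
Proof.
rewrite /Ypartial big_ord_recl /Yterm big_ord0 mulr_sumr; congr (_ + _).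
by apply: eq_bigr => i _; rewrite big_ord_recl.
Qed.

(** * Moments of [Y] *)

Section moments.
Context (R : realType) (d : measure_display) (T : measurableType d)
  (P : probability T R) (xi : nat -> T -> R) (hiid : iid_seq P xi)
  (hpos : forall j x, (0 < xi j x)%R).
Local Open Scope ereal_scope.

Lemma mom_ge0 q : 0 <= mom P xi q.
Proof. by apply: integral_ge0 => x _; rewrite lee_fin powR_ge0. Qed.

Lemma mom_fin_num q : mom P xi q < +oo -> mom P xi q \is a fin_num.
Proof. by rewrite ge0_fin_numE // mom_ge0. Qed.

Lemma integral_prod_powR (J : seq nat) (e : nat -> R) : uniq J ->
  (forall j, mom P xi (e j) < +oo) ->
  \int[P]_x (\prod_(j <- J) (xi j x) `^ (e j))%:E = \prod_(j <- J) mom P xi (e j).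
Proof.
move=> uJ mom_fin; apply: (iid_integral_prod hiid (f := fun j y => y `^ e j)%R uJ).
by split=> [j|j y|j]; [exact: measurable_powR | exact: powR_ge0 | exact: mom_fin].
Qed.

Lemma integral_prod_expn M (e : nat -> nat) : (forall j, mom P xi (e j)%:R < +oo) ->
  \int[P]_x (\prod_(j < M) xi j x ^+ e j)%:E = \prod_(j < M) mom P xi (e j)%:R.
Proof.
move=> mom_fin; rewrite -(big_mkord xpredT (fun j => mom P xi (e j)%:R)).
rewrite -integral_prod_powR ?iota_uniq //; apply: eq_integral => x _.
by rewrite big_mkord; congr EFin; apply: eq_bigr => j _; rewrite powR_mulrn // ltW.
Qed.

Lemma moment_Yterm r m k : mom P xi r = m%:E ->
  \int[P]_x ((Yterm xi k x) `^ r)%:E = (m ^+ k)%:E.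
Proof.
move=> momE; rewrite -[in RHS](card_ord k) -prodr_const -prodEFin -momE.
rewrite -(big_mkord xpredT (fun=> mom P xi r)).
rewrite -(integral_prod_powR (e := fun=> r)) ?iota_uniq ?momE ?ltry //.
apply: eq_integral => x _.
by rewrite /Yterm big_mkord powR_prod // => j; exact: ltW.
Qed.

Lemma integral_affine (a b : R) (g : T -> R) : (0 <= a)%R -> (0 <= b)%R ->
  measurable_fun setT g -> (forall x, 0 <= g x)%R ->
  \int[P]_x (a + b * g x)%:E = a%:E + b%:E * \int[P]_x (g x)%:E.
Proof.
move=> a0 b0 mg g0; under eq_integral do rewrite EFinD EFinM.
rewrite ge0_integralD //; last 2 first.
- by move=> x _; rewrite -EFinM lee_fin mulr_ge0.
- exact/measurable_funeM/measurable_EFinP.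
rewrite integral_cst //; set PT := (X in _ * X + _).
rewrite (_ : PT = 1) ?mule1; last exact: probability_setT.
by rewrite ge0_integralZl_EFin //; [move=> x _; rewrite lee_fin | exact/measurable_EFinP].
Qed.

End moments.

Section moment_bounds.
Context (R : realType) (d : measure_display) (T : measurableType d)
  (P : probability T R) (xi : nat -> T -> R) (hiid : iid_seq P xi)
  (hpos : forall j x, (0 < xi j x)%R).
Local Open Scope ereal_scope.

Let mxi := measurable_xi hiid.

Let measurable_xi_powR j r : measurable_fun setT (fun x => ((xi j x) `^ r)%:E).
Proof. exact/measurable_EFinP/(measurableT_comp (measurable_powR r))/mxi. Qed.

Let measurable_Yterm_powR k r : measurable_fun setT (fun x => ((Yterm xi k x) `^ r)%:E).
Proof. exact/measurable_EFinP/(measurableT_comp (measurable_powR r))/(measurable_Yterm mxi). Qed.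

Lemma mom_le_EYp p : (0 < p)%R -> mom P xi p <= EYp P xi p.
Proof.
move=> p0; apply: le_trans (moment_Ypartial_le P mxi hpos 2 p0).
apply: ge0_le_integral => //; first by move=> x _; rewrite lee_fin powR_ge0.
- exact: (measurable_Ypartial_powR mxi).
move=> x _; rewrite lee_fin ge0_ler_powR ?nnegrE ?(ltW p0) ?Ypartial_ge0 ?(ltW (hpos _ _)) //.
by rewrite YpartialS /Yterm big_ord1 lerDr Ypartial_ge0.
Qed.

Lemma sum_moment_Yterm_le p N : (1 <= p)%R ->
  \sum_(k < N) \int[P]_x ((Yterm xi k x) `^ p)%:E <= EYp P xi p.
Proof.
move=> p1; have p0 : (0 < p)%R by apply: lt_le_trans p1.
apply: le_trans (moment_Ypartial_le P mxi hpos N p0).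
rewrite -ge0_integral_sum //; last by move=> k x _; rewrite lee_fin powR_ge0.
apply: ge0_le_integral => //.
- by move=> x _; apply: sume_ge0 => k _; rewrite lee_fin powR_ge0.
- exact: emeasurable_sum.
- exact: (measurable_Ypartial_powR mxi).
move=> x _; rewrite sumEFin lee_fin.
by apply: (@sum_powR_le _ N (Yterm xi ^~ x)) => // k; exact/ltW/Yterm_gt0.
Qed.

Lemma mom_lt1_of_EYp_lty p : (1 <= p)%R -> EYp P xi p < +oo -> mom P xi p < 1.
Proof.
move=> p1 EYp_lty; have p0 : (0 < p)%R by apply: lt_le_trans p1.
rewrite ltNge; apply/negP => mom_ge1.
have mom_fin := mom_fin_num (le_lt_trans (mom_le_EYp p0) EYp_lty).
have EYp_fin : EYp P xi p \is a fin_num.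
  by rewrite ge0_fin_numE // integral_ge0 // => x _; exact: poweR_ge0.
have [N EYp_ltN] : exists N : nat, (fine (EYp P xi p) < N%:R)%R.
  by exists (Num.truncn (fine (EYp P xi p))).+1; exact: truncnS_gt.
have := sum_moment_Yterm_le N p1.
under eq_bigr do rewrite (moment_Yterm hiid hpos _ (esym (fineK mom_fin))).
rewrite sumEFin -(fineK EYp_fin) lee_fin; apply/negP; rewrite -ltNge.
apply: (lt_le_trans EYp_ltN); rewrite -[in X in (X <= _)%R](card_ord N) -sumr_const.
by apply: ler_sum => k _; rewrite exprn_ege1 // -lee_fin fineK.
Qed.

Lemma mom_lt1_le p q : mom P xi p < 1 -> (0 < q <= p)%R -> mom P xi q < 1.
Proof.
move=> mom_lt1 /andP[q0 qp]; have [->//|qNp] := eqVneq q p.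
have p0 : (0 < p)%R := lt_le_trans q0 qp.
have t01 : (0 < q / p < 1)%R by rewrite divr_gt0 //= ltr_pdivrMr // mul1r lt_neqAle qNp.
have mom_fin := mom_fin_num (lt_trans mom_lt1 (ltry 1)).
apply: (@le_lt_trans _ _ (\int[P]_x (1 - q / p + q / p * (xi 0%N x) `^ p)%:E)).
  apply: ge0_le_integral => //; first by move=> x _; rewrite lee_fin powR_ge0.
  - apply/measurable_EFinP/measurable_funD => //; apply: measurable_funM => //.
    by apply/measurable_EFinP; exact: measurable_xi_powR.
  move=> x _; rewrite lee_fin -[X in (_ `^ X <= _)%R](divfK (lt0r_neq0 p0)) [(q / p * p)%R]mulrC powRrM.
  exact/powR_le_affine/t01/powR_ge0.
case/andP: t01 => t0 t1.
rewrite integral_affine ?subr_ge0 ?(ltW t0) ?(ltW t1) //; last 2 first.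
- by apply/measurable_EFinP; exact: measurable_xi_powR.
- by move=> x; rewrite powR_ge0.
rewrite -/(mom P xi p) -(fineK mom_fin) -EFinM -EFinD lte_fin.
have : (fine (mom P xi p) < 1)%R by rewrite -lte_fin fineK.
nra.
Qed.

Lemma Lnorm_Yterm r m k : (0 < r)%R -> mom P xi r = m%:E ->
  Lnorm P r%:E (EFin \o Yterm xi k) = ((m `^ r^-1) ^+ k)%:E.
Proof.
move=> r0 momE; have m0 : (0 <= m)%R by rewrite -lee_fin -momE mom_ge0.
rewrite unlock /= (_ : \int[P]_x _ = \int[P]_x ((Yterm xi k x) `^ r)%:E); last first.
  by apply: eq_integral => x _; rewrite ger0_norm // ltW // Yterm_gt0.
rewrite (moment_Yterm hiid hpos k momE) poweR_EFin.
by rewrite -powR_mulrn // powRAC powR_mulrn // powR_ge0.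
Qed.

Lemma Lnorm_Ypartial_le r m N : (1 <= r)%R -> mom P xi r = m%:E ->
  Lnorm P r%:E (EFin \o Ypartial xi N) <= (\sum_(k < N) (m `^ r^-1) ^+ k)%:E.
Proof.
move=> r1 momE; have r0 : (0 < r)%R by apply: lt_le_trans r1.
elim: N => [|N IH].
  rewrite big_ord0 (@eq_Lnorm _ _ _ P r%:E _ (cst 0)) => [|x]; last by rewrite /= /Ypartial big_ord0.
  by rewrite Lnorm0 // eqe lt0r_neq0.
rewrite (@eq_Lnorm _ _ _ P r%:E _ (EFin \o (Ypartial xi N \+ Yterm xi N)%R)); last first.
  by move=> x; rewrite /= YpartialS.
apply: le_trans (minkowski_EFin P (measurable_Ypartial mxi N) (measurable_Yterm mxi N) r1) _.
by rewrite big_ord_recr /= EFinD (Lnorm_Yterm _ r0 momE) leeD2r.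
Qed.

Lemma EYp_le p : (1 <= p)%R -> mom P xi p < 1 ->
  EYp P xi p <= ((1 - fine (mom P xi p) `^ p^-1) `^ (- p))%:E.
Proof.
move=> p1 mom_lt1; have p0 : (0 < p)%R by apply: lt_le_trans p1.
have mom_fin := mom_fin_num (lt_trans mom_lt1 (ltry 1)).
set m := fine (mom P xi p); have momE : mom P xi p = m%:E by rewrite fineK.
have m0 : (0 <= m)%R by rewrite -lee_fin -momE mom_ge0.
set a := (m `^ p^-1)%R; have a0 : (0 <= a)%R by exact: powR_ge0.
have a1 : (a < 1)%R.
  have m1 : (m < 1)%R by rewrite -lte_fin -momE.
  have pV0 : (0 < p^-1)%R by rewrite invr_gt0.
  have := @gt0_ltr_powR _ _ pV0 m 1%R; rewrite !nnegrE m0 ler01 powR1 m1.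
  exact.
have powNpE : ((1 - a) `^ (- p) = (1 - a)^-1 `^ p)%R.
  by rewrite -[(- p)%R]mulN1r powRrM powR_inv1 // subr_ge0 ltW.
rewrite (EYp_sup P mxi hpos p0) powNpE; apply: ge_ereal_sup => _ [N _ <-].
have normE : \int[P]_x ((Ypartial xi N x) `^ p)%:E =
    Lnorm P p%:E (EFin \o Ypartial xi N) `^ p.
  rewrite poweR_Lnorm ?(lt0r_neq0 p0) //; apply: eq_integral => x _.
  by rewrite -[(EFin \o _) x]/((Ypartial xi N x)%:E) abse_EFin poweR_EFin ger0_norm ?Ypartial_ge0.
rewrite normE; apply: le_trans (poweR_le (ltW p0) (Lnorm_ge0 _ _ _) (Lnorm_Ypartial_le N p1 momE)) _.
rewrite poweR_EFin lee_fin ge0_ler_powR ?nnegrE ?(ltW p0) ?invr_ge0 ?subr_ge0 ?(ltW a1) //.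
- by apply: sumr_ge0 => k _; exact: exprn_ge0.
- exact: sum_expr_le_geometric.
Qed.

End moment_bounds.

(* [F t] is the summand chosen in the [t]-th factor of the [k]-fold product, so [g j] is
   picked once for each [t] with [j < F t]. *)
Definition exponent k N (F : {ffun 'I_k -> 'I_N}) (j : nat) : nat :=
  #|[pred t : 'I_k | (j < F t)%N]|.

Lemma exponent_le k N (F : {ffun 'I_k -> 'I_N}) j : (exponent F j <= k)%N.
Proof. by rewrite /exponent -[X in (_ <= X)%N]card_ord max_card. Qed.

Lemma expr_sum_prefix_prod (R : comPzRingType) (g : nat -> R) N k :
  (\sum_(i < N) \prod_(j < i) g j) ^+ k =
  \sum_(F : {ffun 'I_k -> 'I_N}) \prod_(j < N) g j ^+ exponent F j.
Proof.
rewrite -[in LHS](card_ord k) -prodr_const bigA_distr_bigA; apply: eq_bigr => F _.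
under eq_bigr => t _ do rewrite (big_ord_widen N _ (ltnW (ltn_ord (F t)))) big_mkcond.
rewrite exchange_big; apply: eq_bigr => j _.
by rewrite -big_mkcond /exponent -prodr_const; apply: eq_bigl.
Qed.

Section moment_recursion.
Context (R : realType) (d : measure_display) (T : measurableType d)
  (P : probability T R) (xi : nat -> T -> R) (hiid : iid_seq P xi)
  (hpos : forall j x, (0 < xi j x)%R).
Local Open Scope ereal_scope.

Variable n : nat.
Hypothesis mom_lty : forall k, (k <= n)%N -> mom P xi k%:R < +oo.

Let mxi := measurable_xi hiid.
Let xi' j := xi j.+1.

Definition multinomial_moment N k :=
  \sum_(F : {ffun 'I_k -> 'I_N}) \prod_(j < N) mom P xi (exponent F j)%:R.

Let measurable_monomial N (e : nat -> nat) :
  measurable_fun setT (fun x => (\prod_(j < N) xi j x ^+ e j)%:E).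
Proof.
by apply/measurable_EFinP/measurable_prod => j _; exact/measurable_funX/mxi.
Qed.

Let monomial_ge0 N (e : nat -> nat) x : (0 <= \prod_(j < N) xi j x ^+ e j)%R.
Proof. by apply: prodr_ge0 => j _; exact/exprn_ge0/ltW. Qed.

Lemma moment_Ypartial_expn N k : (k <= n)%N ->
  \int[P]_x ((Ypartial xi N x) ^+ k)%:E = multinomial_moment N k.
Proof.
move=> kn; under eq_integral do rewrite /Ypartial /Yterm (expr_sum_prefix_prod (xi ^~ _)) -sumEFin.
rewrite ge0_integral_sum // => [|F x _]; last by rewrite lee_fin.
apply: eq_bigr => F _; apply: (integral_prod_expn hiid hpos) => j.
exact/mom_lty/(leq_trans (exponent_le F j) kn).
Qed.

Lemma moment_xi0_Yshift_expn N k : (k <= n)%N ->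
  \int[P]_x ((xi 0%N x) ^+ k * (Ypartial xi' N x) ^+ k)%:E =
  mom P xi k%:R * multinomial_moment N k.
Proof.
move=> kn; pose e (F : {ffun 'I_k -> 'I_N}) j := if j is j'.+1 then exponent F j' else k.
have monomialE x : ((xi 0%N x) ^+ k * (Ypartial xi' N x) ^+ k =
    \sum_(F : {ffun 'I_k -> 'I_N}) \prod_(j < N.+1) xi j x ^+ e F j)%R.
  rewrite /Ypartial /Yterm (expr_sum_prefix_prod (xi' ^~ x)) mulr_sumr.
  by apply: eq_bigr => F _; rewrite big_ord_recl.
under eq_integral do rewrite monomialE -sumEFin.
rewrite ge0_integral_sum // => [|F x _]; last by rewrite lee_fin.
rewrite /multinomial_moment ge0_sume_distrr; last first.
  by move=> F _; apply: prode_ge0 => j _; exact: mom_ge0.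
apply: eq_bigr => F _; rewrite (integral_prod_expn hiid hpos) ?big_ord_recl //.
by case=> [|j] /=; apply: mom_lty => //; exact: leq_trans (exponent_le F j) kn.
Qed.

Lemma moment_YpartialS_expn N : \int[P]_x ((Ypartial xi N.+1 x) ^+ n)%:E =
  \sum_(k < n.+1) ('C(n, k)%:R)%:E * (mom P xi k%:R * multinomial_moment N k).
Proof.
have Yshift_ge0 x : (0 <= Ypartial xi' N x)%R by apply: Ypartial_ge0 => j; exact: hpos.
have mYshift : measurable_fun setT (Ypartial xi' N) by apply: measurable_Ypartial => j; exact: mxi.
have prod_ge0 k x : (0 <= (xi 0%N x) ^+ k * (Ypartial xi' N x) ^+ k)%R.
  by rewrite mulr_ge0 // exprn_ge0 // ltW.
have mprod k : measurable_fun setT (fun x => ((xi 0%N x) ^+ k * (Ypartial xi' N x) ^+ k)%:E).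
  by apply/measurable_EFinP/measurable_funM; apply: measurable_funX.
have binomialE x : ((Ypartial xi N.+1 x) ^+ n)%:E = \sum_(k < n.+1)
    ('C(n, k)%:R)%:E * ((xi 0%N x) ^+ k * (Ypartial xi' N x) ^+ k)%:E.
  rewrite YpartialSl addrC exprD1n -sumEFin; apply: eq_bigr => k _.
  by rewrite -EFinM mulr_natl exprMn.
under eq_integral do rewrite binomialE.
rewrite ge0_integral_sum //; last 2 first.
- by move=> k; exact: measurable_funeM.
- by move=> k x _; rewrite mule_ge0 ?lee_fin.
apply: eq_bigr => k _; rewrite ge0_integralZl_EFin // => [|x _]; last by rewrite lee_fin.
by rewrite moment_xi0_Yshift_expn // -ltnS.
Qed.

End moment_recursion.

Section integer_moments.
Context (R : realType) (d : measure_display) (T : measurableType d)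
  (P : probability T R) (xi : nat -> T -> R) (hiid : iid_seq P xi)
  (hpos : forall j x, (0 < xi j x)%R).
Local Open Scope ereal_scope.

Let mxi := measurable_xi hiid.

Let integral_one : \int[P]_x (1%:E : \bar R) = 1.
Proof. by rewrite integral_cst // mul1e; exact: probability_setT. Qed.

Lemma mom0 : mom P xi 0%:R = 1.
Proof. by rewrite /mom; under eq_integral do rewrite powRr0; exact: integral_one. Qed.

Lemma EYp0 : EYp P xi 0%:R = 1.
Proof. by rewrite /EYp; under eq_integral do rewrite poweRe0; exact: integral_one. Qed.

Lemma cvg_moment_Ypartial_expn k :
  \int[P]_x ((Ypartial xi N x) ^+ k)%:E @[N --> \oo] --> EYp P xi k%:R.
Proof.
case: k => [|k].
  rewrite EYp0 (_ : (fun N => _) = fun=> 1); first exact: cvg_cst.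
  by apply: funext => N; under eq_integral do rewrite expr0; exact: integral_one.
have powRE N x : ((Ypartial xi N x) ^+ k.+1 = (Ypartial xi N x) `^ k.+1%:R)%R.
  by rewrite powR_mulrn // Ypartial_ge0.
under eq_fun do under eq_integral do rewrite powRE.
by apply: cvg_moment_Ypartial; rewrite ?ltr0n.
Qed.

Variable n : nat.
Hypothesis mom_lt1 : mom P xi n%:R < 1.

Lemma mom_nat_lty k : (k <= n)%N -> mom P xi k%:R < +oo.
Proof.
case: k => [|k] kn; first by rewrite mom0 ltry.
apply: lt_trans (ltry 1); apply: (mom_lt1_le hiid mom_lt1).
by rewrite ltr0n ler_nat.
Qed.

Lemma EYp_nat_fin_num k : (k <= n)%N -> EYp P xi k%:R \is a fin_num.
Proof.
case: k => [|k] kn; first by rewrite EYp0.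
rewrite ge0_fin_numE; last by apply: integral_ge0 => x _; exact: poweR_ge0.
apply: le_lt_trans (EYp_le hiid hpos _ _) (ltry _); first by rewrite ler1n.
by apply: (mom_lt1_le hiid mom_lt1); rewrite ltr0n ler_nat.
Qed.

Lemma EYp_binomial : EYp P xi n%:R =
  \sum_(k < n.+1) ('C(n, k)%:R)%:E * (mom P xi k%:R * EYp P xi k%:R).
Proof.
have lim_multinomial k : (k <= n)%N ->
    multinomial_moment P xi N k @[N --> \oo] --> EYp P xi k%:R.
  move=> kn; under eq_fun do rewrite -(moment_Ypartial_expn hiid hpos mom_nat_lty _ kn).
  exact: cvg_moment_Ypartial_expn.
suff : multinomial_moment P xi N n @[N --> \oo] -->
    \sum_(k < n.+1) ('C(n, k)%:R)%:E * (mom P xi k%:R * EYp P xi k%:R).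
  exact: cvg_unique (lim_multinomial n (leqnn n)).
rewrite -(cvg_shiftS (multinomial_moment P xi ^~ n)) /=.
under eq_fun do rewrite -(moment_Ypartial_expn hiid hpos mom_nat_lty _ (leqnn n))
  (moment_YpartialS_expn hiid hpos mom_nat_lty).
have multinomial_ge0 N k : 0 <= multinomial_moment P xi N k.
  by apply: sume_ge0 => F _; apply: prode_ge0 => j _; exact: mom_ge0.
apply: cvge_sum_ge0 => [k N|k|k].
- by rewrite mule_ge0 ?lee_fin ?mule_ge0 ?mom_ge0.
- by rewrite mule_ge0 ?lee_fin ?mule_ge0 ?mom_ge0 // integral_ge0 // => x _; exact: poweR_ge0.
- apply: cvgeZl => //; apply: cvgeZl; first by apply/mom_fin_num/mom_nat_lty; rewrite -ltnS.
  by apply: lim_multinomial; rewrite -ltnS.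
Qed.

Lemma EYp_natE : EYp P xi n%:R = ((1 - fine (mom P xi n%:R))^-1)%:E *
  \sum_(k < n) ('C(n, k)%:R)%:E * mom P xi k%:R * EYp P xi k%:R.
Proof.
have := EYp_binomial; rewrite big_ord_recr /= binn mul1e.
set S := \sum_(k < n) _; set S' := \sum_(k < n) _.
have -> : S = S' by apply: eq_bigr => k _; rewrite muleA.
have S'_fin : S' \is a fin_num.
  apply: (big_ind (fun x => x \is a fin_num)) => // [x y xfin yfin|k _].
    by rewrite fin_numD xfin yfin.
  rewrite fin_numM ?fin_numM //; last exact/EYp_nat_fin_num/ltnW.
  exact/mom_fin_num/mom_nat_lty/ltnW.
have mom_fin := mom_fin_num (mom_nat_lty (leqnn n)).
have EYp_fin := EYp_nat_fin_num (leqnn n).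
rewrite -(fineK S'_fin) -(fineK EYp_fin) -(fineK mom_fin) -!EFinM -EFinD => /eqP.
rewrite eqe => /eqP EYpE; congr EFin.
have mom_lt1' : (fine (mom P xi n%:R) < 1)%R by rewrite -lte_fin fineK.
have mom_neq1 : (1 - fine (mom P xi n%:R) != 0)%R by rewrite subr_eq0 eq_sym lt_eqF.
have -> : fine S' = ((1 - fine (mom P xi n%:R)) * fine (EYp P xi n%:R))%R.
  by rewrite mulrBl mul1r {1}EYpE; ring.
by rewrite /= mulKf.
Qed.

End integer_moments.

Theorem theorem2 (R : realType) (d : measure_display) (T : measurableType d)
  (P : probability T R) (xi : nat -> T -> R)
  (hiid : iid_seq P xi) (hpos : forall j x, 0 < xi j x)
  (p : R) (hp : 1 <= p) :
  ((EYp P xi p < +oo)%E <-> (mom P xi p < 1)%E) /\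
  ((mom P xi p < 1)%E ->
     (forall q : R, 1 <= q <= p -> (mom P xi q < 1)%E) /\
     (EYp P xi p <= ((1 - fine (mom P xi p) `^ p^-1) `^ (- p))%:E)%E) /\
  (forall n : nat, p = n%:R -> (mom P xi p < 1)%E ->
     EYp P xi p =
       (((1 - fine (mom P xi p))^-1)%:E *
        \sum_(k < n) ('C(n, k)%:R)%:E * mom P xi k%:R * EYp P xi k%:R)%E).
Proof.
have EYp_lty : (mom P xi p < 1)%E -> (EYp P xi p < +oo)%E.
  by move=> mom_lt1; apply: le_lt_trans (EYp_le hiid hpos hp mom_lt1) (ltry _).
split; [split|split].
- exact: (mom_lt1_of_EYp_lty hiid hpos hp).
- exact: EYp_lty.
- move=> mom_lt1; split; last exact: EYp_le.
  by move=> q /andP[q1 qp]; apply: (mom_lt1_le hiid mom_lt1); rewrite qp (lt_le_trans ltr01).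
- by move=> n -> mom_lt1; exact: EYp_natE.
Qed.
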